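(* Assume that for every $y\in\mathcal Y$ the map $u\mapsto\ell(y,u)$ is convex and $\rho$-Lipschitz continuous for some constant $\rho\in(0,\infty)$, and that for every $y\in\mathcal Y$ the map $u\mapsto s(y,u)$ is $\gamma$-Lipschitz continuous for some constant $\gamma\in(0,\infty)$. Then for every $y\in\mathcal Y$, $$|S_{\lambda;D^y}(X_i,Y_i)-\tilde S_{\lambda;D^y}(X_i,Y_i)|\le\tau^{(0)}_{\lambda;i}\ \ (1\le i\le n),\qquad |S_{\lambda;D^y}(X_{n+1},y)-\tilde S_{\lambda;D^y}(X_{n+1},y)|\le\tau^{(0)}_{\lambda;n+1},$$ where for every $i\in\{1,\dots,n+1\}$, $\tau^{(0)}_{\lambda;i}=\sqrt{K_{i,i}}\sqrt{K_{n+1,n+1}}\,\frac{\gamma\rho}{\lambda(n+1)}$.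
   Context: Let $\mathcal X\subset\mathbb R^d$, $\mathcal Y\subset\mathbb R$, $D=\{(X_1,Y_1),\dots,(X_n,Y_n)\}$ i.i.d. with distribution $P$ on $\mathcal X\times\mathcal Y$, and $(X_{n+1},Y_{n+1})\sim P$ independent of $D$. For $y\in\mathcal Y$, $D^y=D\cup\{(X_{n+1},y)\}$. Let $\mathcal H$ be a reproducing kernel Hilbert space of functions $\mathcal X\to\mathbb R$ with kernel $\kappa_{\mathcal H}$, norm $\|\cdot\|_{\mathcal H}$, and let $K=(\kappa_{\mathcal H}(X_i,X_j))_{1\le i,j\le n+1}$ be the Gram matrix, with diagonal entries $K_{i,i}=\kappa_{\mathcal H}(X_i,X_i)$. Let $\ell:\mathcal Y\times\mathcal Y\to\mathbb R$ be a loss and $\lambda>0$. For $y\in\mathcal Y$, $\hat f_{\lambda;D^y}$ denotes the minimizer over $f\in\mathcal H$ of $\frac{1}{n+1}\sum_{(x,y')\in D^y}\ell(y',f(x))+\lambda\|f\|_{\mathcal H}^2$. Given a non-conformity function $s:\mathcal Y\times\mathcal Y\to\mathbb R_+$, the scores are $S_{\lambda;D^y}(X_i,Y_i)=s(Y_i,\hat f_{\lambda;D^y}(X_i))$ for $i\le n$ and $S_{\lambda;D^y}(X_{n+1},y)=s(y,\hat f_{\lambda;D^y}(X_{n+1}))$. Fix $z\in\mathcal Y$; the approximate scores are $\tilde S_{\lambda;D^y}(X_i,Y_i)=s(Y_i,\hat f_{\lambda;D^z}(X_i))$ for $i\le n$ and $\tilde S_{\lambda;D^y}(X_{n+1},y)=s(y,\hat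 f_{\lambda;D^z}(X_{n+1}))$. *)

From mathcomp Require Import all_boot all_order all_algebra.
From mathcomp Require Import reals.
Set Implicit Arguments. Unset Strict Implicit. Unset Printing Implicit Defensive.
Import Order.TTheory GRing.Theory Num.Theory.
Local Open Scope ring_scope.

Section RKHS.
Variables (R : realType) (T : Type) (H : lmodType R).

Definition ip_norm (ip : H -> H -> R) (f : H) : R := Num.sqrt (ip f f).

Definition is_hilbert (ip : H -> H -> R) : Prop :=
  [/\ (forall a f g h, ip (a *: f + g) h = a * ip f h + ip g h),
      (forall f g, ip f g = ip g f),
      (forall f, 0 <= ip f f),
      (forall f, ip f f = 0 -> f = 0) &
      (forall u : nat -> H,
         (forall e : R, 0 < e -> exists N : nat, forall m k : nat,
             (N <= m)%N -> (N <= k)%N -> ip_norm ip (u m - u k) < e) ->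
         exists l : H, forall e : R, 0 < e -> exists N : nat, forall m : nat,
             (N <= m)%N -> ip_norm ip (u m - l) < e)].

(* H is a reproducing kernel Hilbert space of functions T -> R:
   ev f is the function represented by f (evaluation map, injective so that
   H is a space of functions), and kfeat x = kappa(x, .) is the representer of
   evaluation at x (reproducing property). *)
Definition is_RKHS (ip : H -> H -> R) (ev : H -> T -> R) (kfeat : T -> H) : Prop :=
  [/\ is_hilbert ip,
      (forall f g, (forall x, ev f x = ev g x) -> f = g) &
      (forall f x, ev f x = ip f (kfeat x))].

Definition rkernel (ip : H -> H -> R) (kfeat : T -> H) (x x' : T) : R :=
  ip (kfeat x) (kfeat x').

End RKHS.

(* Gram matrix K = (kappa(X_i, X_j))_{1 <= i,j <= n+1}, indices 'I_n.+1,
   ord_max being the index n+1. *)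
Definition gram (R : realType) (T : Type) (H : lmodType R)
  (ip : H -> H -> R) (kfeat : T -> H) (n : nat) (Xs : 'I_n.+1 -> T)
  : 'M[R]_n.+1 := \matrix_(i, j) rkernel ip kfeat (Xs i) (Xs j).

(* labels of the augmented data set D^w: Y_i for i <= n, w for index n+1 *)
Definition aug_labels (R : realType) (n : nat) (Ys : 'I_n -> R) (w : R)
  (i : 'I_n.+1) : R := oapp Ys w (unlift ord_max i).

Definition reg_risk (R : realType) (T : Type) (H : lmodType R)
  (ip : H -> H -> R) (ev : H -> T -> R) (l : R -> R -> R) (lambda : R)
  (n : nat) (Xs : 'I_n.+1 -> T) (Ys : 'I_n -> R) (w : R) (f : H) : R :=
  (n.+1%:R)^-1 * (\sum_(i < n.+1) l (aug_labels Ys w i) (ev f (Xs i)))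
  + lambda * (ip_norm ip f) ^+ 2.

(* The regularized risk is a convex data term plus lambda ||f||^2, hence
   lambda-strongly convex, so its minimizer f_w satisfies
   lambda ||g - f_w||^2 <= risk_w g - risk_w f_w.  Applying this to f_y and f_z
   and adding, only the losses at the last point X_{n+1} survive, since the two
   risks differ only there; the rho-Lipschitz loss, the reproducing property and
   Cauchy-Schwarz then give
   2 lambda ||f_y - f_z||^2 <= 2 rho / (n+1) * ||f_y - f_z|| * sqrt K_{n+1,n+1}.
   Hence ||f_y - f_z|| <= rho sqrt K_{n+1,n+1} / (lambda (n+1)), and a
   gamma-Lipschitz score moves at X_i by at most gamma ||f_y - f_z|| sqrt K_{i,i}. *)

From mathcomp Require Import all_boot all_order all_algebra.
From mathcomp Require Import reals ring lra.
Set Implicit Arguments. Unset Strict Implicit. Unset Printing Implicit Defensive.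
Import Order.TTheory GRing.Theory Num.Theory.
Local Open Scope ring_scope.

Lemma ler_of_onem_mul_le (R : realFieldType) (A B : R) :
  0 <= B -> (forall t, 0 < t <= 1 -> (1 - t) * B <= A) -> B <= A.
Proof.
move=> B_ge0 onem_le; apply/ler_addgt0Pr => e e_gt0.
have Be_gt0 : 0 < B + e by lra.
have t01 : 0 < e / (B + e) <= 1.
  by rewrite divr_gt0 // ler_pdivrMr // mul1r; lra.
have := onem_le _ t01.
have -> : (1 - e / (B + e)) * B = B - e + e ^+ 2 / (B + e) by field; lra.
have : 0 <= e ^+ 2 / (B + e) by rewrite divr_ge0 ?sqr_ge0 ?ltW.
lra.
Qed.

Section InnerProduct.
Variables (R : realType) (H : lmodType R) (ip : H -> H -> R).
Hypothesis ipDZl : forall a f g h, ip (a *: f + g) h = a * ip f h + ip g h.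
Hypothesis ipC : forall f g, ip f g = ip g f.
Hypothesis ip_ge0 : forall f, 0 <= ip f f.
Hypothesis ip_eq0 : forall f, ip f f = 0 -> f = 0.

Lemma ip0l h : ip 0 h = 0.
Proof.
have := ipDZl 1 0 0 h; rewrite scaler0 addr0 mul1r => /esym idem.
by apply: (@addrI _ (ip 0 h)); rewrite addr0.
Qed.

Lemma ipZl a f h : ip (a *: f) h = a * ip f h.
Proof. by have := ipDZl a f 0 h; rewrite !addr0 ip0l addr0. Qed.

Lemma ipDl f g h : ip (f + g) h = ip f h + ip g h.
Proof. by have := ipDZl 1 f g h; rewrite scale1r mul1r. Qed.

Lemma ipBl f g h : ip (f - g) h = ip f h - ip g h.
Proof. by rewrite ipDl -scaleN1r ipZl mulN1r. Qed.

Lemma ipZr a f h : ip h (a *: f) = a * ip h f.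
Proof. by rewrite ipC ipZl ipC. Qed.

Lemma ipDr f g h : ip h (f + g) = ip h f + ip h g.
Proof. by rewrite ipC ipDl !(ipC h). Qed.

Lemma ipBr f g h : ip h (f - g) = ip h f - ip h g.
Proof. by rewrite ipC ipBl !(ipC h). Qed.

Lemma ip_distC f g : ip (f - g) (f - g) = ip (g - f) (g - f).
Proof.
by rewrite -[g - f]opprB -[- (f - g)]scaleN1r ipZl ipZr mulrA mulN1r opprK mul1r.
Qed.

Lemma ip_normE f : ip_norm ip f ^+ 2 = ip f f.
Proof. exact: sqr_sqrtr. Qed.

Lemma ip_norm_ge0 f : 0 <= ip_norm ip f.
Proof. exact: sqrtr_ge0. Qed.

Lemma ip_convex_comb t f g :
  ip (t *: f + (1 - t) *: g) (t *: f + (1 - t) *: g)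
  = t * ip f f + (1 - t) * ip g g - t * (1 - t) * ip (f - g) (f - g).
Proof. rewrite ipBl !ipBr ipDl !ipDr !ipZl !ipZr (ipC g f); ring. Qed.

Lemma ip_cauchy_schwarz f g : `|ip f g| <= ip_norm ip f * ip_norm ip g.
Proof.
have [g0 | gn0] := eqVneq (ip g g) 0.
  by rewrite (ip_eq0 g0) ipC ip0l normr0 mulr_ge0 ?ip_norm_ge0.
have g_gt0 : 0 < ip g g by rewrite lt_def gn0 ip_ge0.
set a := ip f f; set b := ip f g; set c := ip g g.
have proj_ge0 : 0 <= a - b ^+ 2 / c.
  rewrite (_ : _ - _ = ip (f - (b / c) *: g) (f - (b / c) *: g)) ?ip_ge0 //.
  rewrite ipBl !ipBr !ipZl !ipZr (ipC g f) -/a -/b -/c.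
  by field; rewrite lt0r_neq0.
have le_b2 : b ^+ 2 <= a * c by rewrite -ler_pdivrMr //; lra.
by rewrite -sqrtr_sqr -sqrtrM ?ip_ge0 // ler_wsqrtr.
Qed.

Lemma ip_strong_convexity (L : H -> R) lam t f g :
  L (t *: f + (1 - t) *: g) <= t * L f + (1 - t) * L g ->
  L (t *: f + (1 - t) *: g) + lam * ip (t *: f + (1 - t) *: g) (t *: f + (1 - t) *: g)
  <= t * (L f + lam * ip f f) + (1 - t) * (L g + lam * ip g g)
     - lam * (t * (1 - t) * ip (f - g) (f - g)).
Proof. by rewrite ip_convex_comb; lra. Qed.

Lemma optimality_gap_ge (F : H -> R) lam fw g :
  0 <= lam ->
  (forall t, 0 < t <= 1 -> F (t *: g + (1 - t) *: fw)
     <= t * F g + (1 - t) * F fw - lam * (t * (1 - t) * ip (g - fw) (g - fw))) ->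
  (forall h, F fw <= F h) ->
  lam * ip (g - fw) (g - fw) <= F g - F fw.
Proof.
move=> lam_ge0 F_segment fw_min.
apply: ler_of_onem_mul_le => [|t t01]; first by rewrite mulr_ge0.
(* compare fw with the point at parameter t on the segment to g, then let t -> 0 *)
have le_comb := le_trans (fw_min _) (F_segment t t01).
case/andP: t01 => t_gt0 _.
rewrite -(ler_pM2l t_gt0); nra.
Qed.

End InnerProduct.

Definition convex_fun (R : realType) (g : R -> R) :=
  forall a b t, 0 <= t <= 1 -> g (t * a + (1 - t) * b) <= t * g a + (1 - t) * g b.

Definition lipschitz (R : realType) (k : R) (g : R -> R) :=
  forall a b, `|g a - g b| <= k * `|a - b|.

Lemma aug_labels_widen (R : realType) n (Ys : 'I_n -> R) w (i : 'I_n) :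
  aug_labels Ys w (widen_ord (leqnSn n) i) = Ys i.
Proof.
have -> : widen_ord (leqnSn n) i = lift ord_max i by apply: ord_inj; rewrite lift_max.
by rewrite /aug_labels liftK.
Qed.

Lemma aug_labels_max (R : realType) n (Ys : 'I_n -> R) w : aug_labels Ys w ord_max = w.
Proof. by rewrite /aug_labels unlift_none. Qed.

Lemma reg_risk_labelB (R : realType) T (H : lmodType R) (ip : H -> H -> R) ev l lambda
    n (Xs : 'I_n.+1 -> T) Ys w w' f :
  reg_risk ip ev l lambda Xs Ys w f - reg_risk ip ev l lambda Xs Ys w' f
  = (n.+1%:R)^-1 * (l w (ev f (Xs ord_max)) - l w' (ev f (Xs ord_max))).
Proof.
rewrite /reg_risk !big_ord_recr /= !aug_labels_max.
under eq_bigr do rewrite aug_labels_widen.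
under [X in _ - (_ * (X + _) + _)]eq_bigr do rewrite aug_labels_widen.
ring.
Qed.

Section RKHS.
Variables (R : realType) (T : Type) (H : lmodType R).
Variables (ip : H -> H -> R) (ev : H -> T -> R) (kfeat : T -> H).
Hypothesis HR : is_RKHS ip ev kfeat.
Variables (n : nat) (Xs : 'I_n.+1 -> T) (Ys : 'I_n -> R) (l : R -> R -> R) (lambda : R).

Local Notation risk := (reg_risk ip ev l lambda Xs Ys).

Lemma ev_dist_le f g x :
  `|ev f x - ev g x| <= ip_norm ip (f - g) * Num.sqrt (rkernel ip kfeat x x).
Proof.
have [[ipDZl ipC ip_ge0 ip_eq0 _] _ evE] := HR.
by rewrite !evE -ipBl //; apply: ip_cauchy_schwarz.
Qed.

Lemma reg_risk_optimality_gap w fw g :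
  0 <= lambda -> (forall i, convex_fun (l (aug_labels Ys w i))) ->
  (forall h, risk w fw <= risk w h) ->
  lambda * ip (g - fw) (g - fw) <= risk w g - risk w fw.
Proof.
have [[ipDZl ipC ip_ge0 _ _] _ evE] := HR.
move=> lambda_ge0 l_convex fw_min; apply: optimality_gap_ge => // t /andP[t_gt0 t_le1].
rewrite /reg_risk !ip_normE //.
apply: (ip_strong_convexity ipDZl ipC (L :=
  (fun f => n.+1%:R^-1 * \sum_(i < n.+1) l (aug_labels Ys w i) (ev f (Xs i))))).
rewrite mulrCA [(1 - t) * _]mulrCA -mulrDr ler_wpM2l ?invr_ge0 //.
rewrite !mulr_sumr -big_split ler_sum // => i _.
by rewrite evE ipDl // !ipZl // -!evE; apply: l_convex; lra.
Qed.

Lemma reg_risk_minimizer_stable rho y z fy fz :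
  0 < lambda -> 0 <= rho ->
  (forall i, convex_fun (l (aug_labels Ys y i))) ->
  (forall i, convex_fun (l (aug_labels Ys z i))) ->
  lipschitz rho (l y) -> lipschitz rho (l z) ->
  (forall h, risk y fy <= risk y h) -> (forall h, risk z fz <= risk z h) ->
  ip_norm ip (fy - fz)
  <= (n.+1%:R)^-1 * rho * Num.sqrt (rkernel ip kfeat (Xs ord_max) (Xs ord_max)) / lambda.
Proof.
have [[ipDZl ipC ip_ge0 _ _] _ _] := HR.
move=> lambda_gt0 rho_ge0 y_convex z_convex y_lip z_lip fy_min fz_min.
set x := Xs ord_max; set k := Num.sqrt _; set c := (n.+1%:R)^-1.
set N := ip_norm ip (fy - fz).
have gap_y := reg_risk_optimality_gap fz (ltW lambda_gt0) y_convex fy_min.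
have gap_z := reg_risk_optimality_gap fy (ltW lambda_gt0) z_convex fz_min.
rewrite ip_distC // -ip_normE // -/N in gap_y; rewrite -ip_normE // -/N in gap_z.
set a := ev fz x; set b := ev fy x.
have shift_fz : risk y fz - risk z fz = c * (l y a - l z a) 
  by apply: reg_risk_labelB.
have shift_fy : risk y fy - risk z fy = c * (l y b - l z b) 
  by apply: reg_risk_labelB.
have lip_sum : (l y a - l y b) + (l z b - l z a) <= 2 * rho * (N * k).
  have ev_le : `|b - a| <= N * k by apply: ev_dist_le.
  have := ler_wpM2l rho_ge0 ev_le.
  have := le_trans (ler_norm _) (y_lip a b); have := le_trans (ler_norm _) (z_lip b a).
  rewrite (distrC a b); lra.
have c_gt0 : 0 < c by rewrite invr_gt0 ltr0n.
have c_lip_sum := ler_wpM2l (ltW c_gt0) lip_sum.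
have N_ge0 : 0 <= N := ip_norm_ge0 _ _.
have k_ge0 : 0 <= k := sqrtr_ge0 _.
have sq_le : lambda * N ^+ 2 <= c * rho * k * N by lra.
rewrite ler_pdivlMr //.
have [-> | N_neq0] := eqVneq N 0.
  by rewrite mul0r !mulr_ge0 // ltW.
have N_gt0 : 0 < N by rewrite lt_def N_neq0.
by rewrite mulrC -(ler_pM2r N_gt0); lra.
Qed.

End RKHS.

Theorem theorem8 (R : realType) (d n : nat)
  (Xset : 'rV[R]_d -> Prop) (Yset : R -> Prop)
  (H : lmodType R) (ip : H -> H -> R)
  (ev : H -> {x : 'rV[R]_d | Xset x} -> R) (kfeat : {x : 'rV[R]_d | Xset x} -> H)
  (HRKHS : is_RKHS ip ev kfeat)
  (Xs : 'I_n.+1 -> {x : 'rV[R]_d | Xset x}) (Ys : 'I_n -> R)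
  (HYs : forall i, Yset (Ys i))
  (l : R -> R -> R) (s : R -> R -> R) (lambda rho gamma : R)
  (Hlambda : 0 < lambda) (Hrho : 0 < rho) (Hgamma : 0 < gamma)
  (Hl_convex : forall y, Yset y -> forall (a b t : R), 0 <= t <= 1 ->
      l y (t * a + (1 - t) * b) <= t * l y a + (1 - t) * l y b)
  (Hl_lip : forall y, Yset y -> forall a b : R, `|l y a - l y b| <= rho * `|a - b|)
  (Hs_nonneg : forall y u, Yset y -> 0 <= s y u)
  (Hs_lip : forall y, Yset y -> forall a b : R, `|s y a - s y b| <= gamma * `|a - b|)
  (fhat : R -> H)
  (Hfhat : forall w, Yset w -> forall g : H,
      reg_risk ip ev l lambda Xs Ys w (fhat w) <= reg_risk ip ev l lambda Xs Ys w g)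
  (z : R) (Hz : Yset z) :
  let K := gram ip kfeat Xs in
  let tau0 := fun i : 'I_n.+1 =>
    Num.sqrt (K i i) * Num.sqrt (K ord_max ord_max) * (gamma * rho / (lambda * n.+1%:R)) in
  forall y, Yset y ->
    (forall i : 'I_n,
       `|s (Ys i) (ev (fhat y) (Xs (widen_ord (leqnSn n) i)))
         - s (Ys i) (ev (fhat z) (Xs (widen_ord (leqnSn n) i)))|
       <= tau0 (widen_ord (leqnSn n) i)) /\
    `|s y (ev (fhat y) (Xs ord_max)) - s y (ev (fhat z) (Xs ord_max))| <= tau0 ord_max.
Proof.
move=> K tau0 y Hy.
have label_convex w : Yset w -> forall i, convex_fun (l (aug_labels Ys w i)).
  move=> Hw i; apply: Hl_convex; rewrite /aug_labels.
  by case: unlift => [k|] /=; [apply: HYs | apply: Hw].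
have stable := reg_risk_minimizer_stable HRKHS Hlambda (ltW Hrho)
  (label_convex y Hy) (label_convex z Hz) (Hl_lip y Hy) (Hl_lip z Hz) (Hfhat y Hy) (Hfhat z Hz).
have score_le w : Yset w -> forall j,
    `|s w (ev (fhat y) (Xs j)) - s w (ev (fhat z) (Xs j))| <= tau0 j.
  move=> Hw j; apply: le_trans (Hs_lip w Hw _ _) _.
  have ev_le := ev_dist_le HRKHS (fhat y) (fhat z) (Xs j).
  set kj := Num.sqrt _ in ev_le; set bound := _ / lambda in stable.
  have -> : tau0 j = gamma * (bound * kj).
    rewrite /tau0 /K /gram !mxE /bound /kj.
    by field; rewrite lt0r_neq0 //= addrC natr1 pnatr_eq0.
  rewrite ler_wpM2l ?(ltW Hgamma) //.
  exact: le_trans ev_le (ler_wpM2r (sqrtr_ge0 _) stable).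
by split => [i|]; apply: score_le.
Qed.
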